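(* Let $(G;+)$ be a finite abelian group, $n\ge3$, and $\rho=\{(a_1,\dots,a_n)\in G^n:\ a_1+\dots+a_n=0\}$. Suppose $\rho$ is preserved by a WNU vector-function $(f_1,\dots,f_n)$ of arity $m$. Then for every $j\in\{1,\dots,n\}$ there is a positive integer $t$ with $f_j(x_1,\dots,x_m)=t\cdot x_1+\dots+t\cdot x_m$ for all $x_1,\dots,x_m\in G$.
   Context: A WNU is an $m$-ary ($m\ge2$) operation $f$ with $f(x,\dots,x)=x$ and $f(y,x,\dots,x)=f(x,y,x,\dots,x)=\dots=f(x,\dots,x,y)$. A WNU vector-function of arity $m$ is a tuple $(f_1,\dots,f_n)$ of $m$-ary WNUs on $G$; it preserves $\rho\subseteq G^n$ if for all $\alpha^1,\dots,\alpha^m\in\rho$ the tuple $(f_1(\alpha^1(1),\dots,\alpha^m(1)),\dots,f_n(\alpha^1(n),\dots,\alpha^m(n)))\in\rho$. $t\cdot x$ denotes $x+\dots+x$ ($t$ times). *)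

From HB Require Import structures.
From mathcomp Require Import all_boot all_order all_algebra.
Set Implicit Arguments. Unset Strict Implicit. Unset Printing Implicit Defensive.
Import GRing.Theory.
Local Open Scope ring_scope.

Definition op_on (G : Type) (m : nat) := ('I_m -> G) -> G.

Definition one_diff (G : Type) (m : nat) (x y : G) (i : 'I_m) : 'I_m -> G :=
  fun k => if k == i then y else x.

Definition is_WNU (G : Type) (m : nat) (f : op_on G m) : Prop :=
  (forall x : G, f (fun _ => x) = x) /\
  (forall (x y : G) (i k : 'I_m), f (one_diff x y i) = f (one_diff x y k)).

Definition sum_zero_rel (G : zmodType) (n : nat) (a : 'I_n -> G) : Prop :=
  \sum_(j < n) a j = 0.

Definition vec_preserves (G : Type) (n m : nat) (f : 'I_n -> op_on G m)
    (rho : ('I_n -> G) -> Prop) : Prop :=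
  forall alpha : 'I_m -> ('I_n -> G),
    (forall k, rho (alpha k)) ->
    rho (fun j => f j (fun k => alpha k j)).

(* Because n >= 3, a coordinate can be paired with two others, and the
   constraint x + y + z = 0 spread over three coordinates forces every f_j to
   be additive; together with the WNU identities this makes
   f_j x = h x_1 + ... + h x_m for a single map h : G -> G with m * h a = a.
   Such an h is injective, hence a permutation of the finite set G, so some
   iterate h^k is the identity; then m^k * a = a, and h a = m^(k-1) * a. *)
From HB Require Import structures.
From mathcomp Require Import all_boot all_order all_algebra.
From mathcomp Require Import fingroup perm zify.
From Stdlib Require Import FunctionalExtensionality.
Import GRing.Theory.
Local Open Scope ring_scope.

Lemma exists_ord_neq2 {n : nat} (a c : 'I_n) : (3 <= n)%N ->
  exists b : 'I_n, b != a /\ b != c.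
Proof.
move=> n3; have : (0 < #|~: [set a; c]|)%N.
  by have := cardsC [set a; c]; rewrite cards2 card_ord; case: (a != c); lia.
case/card_gt0P => b; rewrite !inE negb_or => /andP[ba bc].
by exists b.
Qed.

Lemma sum_supp3 {G : zmodType} {n : nat} {a b c : 'I_n} (F : 'I_n -> G) :
  a != b -> a != c -> b != c ->
  (forall l, l \notin [:: a; b; c] -> F l = 0) ->
  \sum_(l < n) F l = F a + F b + F c.
Proof.
move=> ab ac bc F0.
rewrite (bigD1 a) //= (bigD1 b) 1?eq_sym //=.
rewrite (bigD1 c) ?[c == _]eq_sym ?ac ?bc //=.
rewrite big1 ?addr0 ?addrA // => l /andP[/andP[la lb] lc].
by apply: F0; rewrite !inE negb_or la negb_or lb lc.
Qed.

Lemma additive_op_sum {G : zmodType} {m : nat} {g : op_on G m} :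
  g (fun _ => 0) = 0 ->
  (forall x y, g (fun k => x k + y k) = g x + g y) ->
  forall x, g x = \sum_(i < m) g (one_diff 0 (x i) i).
Proof.
move=> g0 gD x.
have g_sum (s : seq 'I_m) : g (fun k => \sum_(i <- s) one_diff 0 (x i) i k)
    = \sum_(i <- s) g (one_diff 0 (x i) i).
  elim: s => [|i s IHs].
    by rewrite big_nil -g0; congr g; apply: functional_extensionality => k;
       rewrite big_nil.
  rewrite big_cons -IHs -gD; congr g; apply: functional_extensionality => k.
  by rewrite big_cons.
rewrite -g_sum; congr g; apply: functional_extensionality => k.
rewrite (bigD1 k) //= /one_diff eqxx big1 ?addr0 // => i.
by rewrite eq_sym => /negbTE ->.
Qed.

Section SumZeroPreservation.
Variables (G : zmodType) (n m : nat) (f : 'I_n -> op_on G m).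
Hypothesis n_ge3 : (3 <= n)%N.
Hypothesis f0 : forall l, f l (fun _ => 0) = 0.
Hypothesis f_pres : vec_preserves f (@sum_zero_rel G n).

Lemma preserves_sum3 {a b c : 'I_n} (x y z : 'I_m -> G) :
  a != b -> a != c -> b != c -> (forall k, x k + y k + z k = 0) ->
  f a x + f b y + f c z = 0.
Proof.
move=> ab ac bc xyz.
pose col l : 'I_m -> G :=
  if l == a then x else if l == b then y else if l == c then z else fun=> 0.
have col_supp l : l \notin [:: a; b; c] -> col l = fun=> 0.
  by rewrite !inE !negb_or /col => /and3P[/negbTE-> /negbTE-> /negbTE->].
have [ba ca cb] : [/\ b != a, c != a & c != b].
  by rewrite ![_ == a]eq_sym ab ac eq_sym.
have [col_a col_b col_c] : [/\ col a = x, col b = y & col c = z].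
  by rewrite /col eqxx (negbTE ba) eqxx (negbTE ca) (negbTE cb) eqxx.
have := f_pres (fun k l => col l k).
rewrite /sum_zero_rel (sum_supp3 _ ab ac bc); last first.
  by move=> l /col_supp ->; apply: f0.
rewrite col_a col_b col_c; apply=> k.
rewrite (sum_supp3 _ ab ac bc); first by rewrite col_a col_b col_c.
by move=> l /col_supp ->.
Qed.

Lemma preserves_opp {a c : 'I_n} (x : 'I_m -> G) :
  a != c -> f a x = - f c (fun k => - x k).
Proof.
move=> ac; have [b [ba bc]] := exists_ord_neq2 a c n_ge3.
have ab : a != b by rewrite eq_sym.
have := preserves_sum3 x (fun=> 0) (fun k => - x k) ab ac bc
  (fun k => ltac:(by rewrite addr0 subrr)).
by rewrite f0 addr0 => /eqP; rewrite addr_eq0 => /eqP.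
Qed.

Lemma preserves_additive (j : 'I_n) (x y : 'I_m -> G) :
  f j (fun k => x k + y k) = f j x + f j y.
Proof.
have [j1 [j1j _]] := exists_ord_neq2 j j n_ge3.
have [j2 [j2j j2j1]] := exists_ord_neq2 j j1 n_ge3.
have jj1 : j != j1 by rewrite eq_sym.
have jj2 : j != j2 by rewrite eq_sym.
have j1j2 : j1 != j2 by rewrite eq_sym.
have same_y : f j1 y = f j y.
  by rewrite (preserves_opp _ j1j2) (preserves_opp _ jj2).
have := preserves_sum3 x y (fun k => - (x k + y k)) jj1 jj2 j1j2
  (fun k => ltac:(by rewrite subrr)).
move/eqP; rewrite same_y addr_eq0 => /eqP ->.
by rewrite (preserves_opp _ jj2).
Qed.

End SumZeroPreservation.

Lemma iter_injective_id {T : finType} {h : T -> T} : injective h ->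
  exists2 k, (0 < k)%N & forall x, iter k h x = x.
Proof.
move=> h_inj; exists #[perm h_inj]%g; first exact: order_gt0.
move=> x; rewrite -(eq_iter (permE h_inj)) -permX.
by rewrite expg_order perm1.
Qed.

Lemma right_inverse_mulrn {G : finZmodType} {m : nat} {h : G -> G} :
  (0 < m)%N -> (forall a, h a *+ m = a) ->
  exists2 t, (0 < t)%N & forall a, h a = a *+ t.
Proof.
move=> m_gt0 hm.
have h_inj : injective h by move=> a b hab; rewrite -(hm a) -(hm b) hab.
have [[|k] // _ hk] := iter_injective_id h_inj.
have iter_mulrn i a : iter i h a *+ m ^ i = a.
  by elim: i a => [|i IHi] a; rewrite ?mulr1n // iterSr expnSr mulrnA IHi hm.
exists (m ^ k)%N; first by rewrite expn_gt0 m_gt0.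
by move=> a; rewrite -{2}(hm a) -mulrnA -expnS -{2}(hk (h a)) iter_mulrn.
Qed.

Theorem mainTheorem15 (G : finZmodType) (n m : nat) (f : 'I_n -> op_on G m) :
  (3 <= n)%N -> (2 <= m)%N ->
  (forall j, is_WNU (f j)) ->
  vec_preserves f (@sum_zero_rel G n) ->
  forall j : 'I_n, exists t : nat, (0 < t)%N /\
    forall x : 'I_m -> G, f j x = \sum_(i < m) (x i *+ t).
Proof.
move=> n_ge3 m_ge2 WNU f_pres j.
have m_gt0 : (0 < m)%N by apply: leq_trans m_ge2.
have f0 l : f l (fun _ => 0) = 0 by case: (WNU l).
have [f_idem f_sym] := WNU j.
pose h a := f j (one_diff 0 a (Ordinal m_gt0)).
have f_sum x : f j x = \sum_(i < m) h (x i).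
  rewrite (additive_op_sum (f0 j)) => [|y z]; last exact: preserves_additive.
  by apply: eq_bigr => i _; apply: f_sym.
have hm a : h a *+ m = a by rewrite -{2}(f_idem a) f_sum sumr_const card_ord.
have [t t_gt0 ht] := right_inverse_mulrn m_gt0 hm.
by exists t; split=> // x; rewrite f_sum; apply: eq_bigr => i _; apply: ht.
Qed.
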